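(* Let $\mathcal{C}$ be a finite set with $|\mathcal{C}|\ge2$ and let $\alpha=(\alpha_j)_{j\in\mathcal{C}}$ with $\alpha_j\in(0,1)$ rational and $\sum_j\alpha_j=1$. Then there exists an unbiased within-quota random roster for $\alpha$, i.e. a random map $\sigma:\{1,2,\dots\}\to\mathcal{C}$ such that, writing $N_j(l)=|\{k\le l:\sigma(k)=j\}|$, almost surely $\lfloor l\alpha_j\rfloor\le N_j(l)\le\lceil l\alpha_j\rceil$ for all $l\ge1$ and $j\in\mathcal{C}$, and $\mathbb{E}[N_j(l)]=l\alpha_j$ for all $l\ge1$ and $j\in\mathcal{C}$.
   Context: A roster is a map $\sigma:\{1,2,\dots\}\to\mathcal{C}$, interpreted as assigning the $k$-th position to category $\sigma(k)$. *)

From HB Require Import structures.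
From mathcomp Require Import all_boot all_order all_algebra.
From mathcomp Require Import all_classical all_reals all_analysis.
Set Implicit Arguments. Unset Strict Implicit. Unset Printing Implicit Defensive.
Import Order.TTheory GRing.Theory Num.Theory.
Local Open Scope ring_scope.
Local Open Scope classical_set_scope.

(* A roster is a map from positions {1,2,...} to categories C; it is
   represented as a function nat -> C whose value at 0 is ignored. *)

Definition count_upto (C : finType) (sigma : nat -> C) (j : C) (l : nat) : nat :=
  (\sum_(1 <= k < l.+1) (sigma k == j))%N.

Definition within_quota (C : finType) (alpha : C -> rat) (sigma : nat -> C) : Prop :=
  forall l j, (1 <= l)%N ->
    (Num.floor (l%:R * alpha j) <= (count_upto sigma j l)%:Z)
    /\ ((count_upto sigma j l)%:Z <= Num.ceil (l%:R * alpha j)).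

Definition random_roster (d : measure_display) (T : measurableType d)
  (C : finType) (sigma : T -> nat -> C) : Prop :=
  forall k j, measurable [set w | sigma w k = j].

Definition unbiased_within_quota_random_roster (R : realType)
  (d : measure_display) (T : measurableType d) (P : probability T R)
  (C : finType) (alpha : C -> rat) (sigma : T -> nat -> C) : Prop :=
  [/\ random_roster sigma,
      {ae P, forall w, within_quota alpha (sigma w)} &
      forall l j, (1 <= l)%N ->
        (\int[P]_w ((count_upto (sigma w) j l)%:R : R)%:E
         = (l%:R * ratr (alpha j) : R)%:E)%E].

(* Write alpha_j = m_j / q with q = sum_j m_j and give category j the m_j tokens (j, k),
   k < m_j, with windows [k/m_j, (k+1)/m_j); position p < q has the window [p/q, (p+1)/q).
   The matrix of the overlaps of token and position windows, scaled by q m_j, has all row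
   and column sums equal to q, so by Hall's theorem it is a sum of q permutation matrices.
   Each of them places every token at a position whose window meets the token's: a token is
   placed before l if its window ends by l/q and only if it starts before l/q, so the number
   of tokens of j placed before l lies between floor and ceil of l m_j / q, and the q-periodic
   roster defined by the permutation is within quota.  Picking one of the q permutations
   uniformly at random, position p gets category j with probability
   (sum of the overlaps of p with the tokens of j) / q = m_j / q, so the roster is unbiased. *)

From HB Require Import structures.
From mathcomp Require Import all_boot all_order all_algebra.
From mathcomp Require Import zify.

Set Implicit Arguments. Unset Strict Implicit.

Lemma sum_pred_eq (T : finType) (P : pred T) (a : T) : \sum_(t | P t) (t == a) = P a.
Proof.
rewrite big_mkcond (bigD1 a) //= eqxx big1 ?addn0; first by case: (P a).
by move=> t /negbTE->; case: (P t).
Qed.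

Lemma sum_in_range n a b : a <= b -> \sum_(k < n) (a <= k < b) = minn b n - minn a n.
Proof.
move=> leab; elim: n => [|n IHn]; first by rewrite big_ord0; lia.
by rewrite big_ord_recr /= IHn; case: (leqP a n); case: (ltnP n b) => /=; lia.
Qed.

Lemma sum_ltn_ord n b : \sum_(k < n) (k < b) = minn b n.
Proof. by have := sum_in_range n (leq0n b); rewrite min0n subn0. Qed.

Lemma sum_ord_eq n (x : nat) : \sum_(k < n) (x == k :> nat) = (x < n).
Proof.
have -> : \sum_(k < n) (x == k :> nat) = \sum_(k < n) (x <= k < x.+1).
  by apply: eq_bigr => k _; rewrite eqn_leq ltnS andbC.
by rewrite sum_in_range //; case: ltnP; lia.
Qed.

Lemma sum_divn_eq a b k : k < a -> \sum_(u < a * b) (u %/ b == k) = b.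
Proof.
move=> ltka; have [->|b_gt0] := posnP b; first by rewrite muln0 big_ord0.
have hi : k.+1 * b <= a * b by rewrite leq_mul2r ltka orbT.
have lo : k * b <= k.+1 * b by rewrite leq_mul2r leqnSn orbT.
rewrite (eq_bigr (fun u : 'I_(a * b) => (k * b <= u < k.+1 * b) : nat)).
  by rewrite sum_in_range // (minn_idPl hi) (minn_idPl (leq_trans lo hi)) mulSn addnK.
by move=> u _; rewrite eqn_leq leq_divRL // -ltnS ltn_divLR // andbC.
Qed.

Section HallMarriage.
Variables (X Y : finType) (R : X -> Y -> bool).
Implicit Types (A S T : {set X}) (B : {set Y}).

Definition neighbours B S : {set Y} :=
  [set y in B | [exists x in S, R x y]].

Definition hall_condition A B : Prop :=
  forall S, S \subset A -> #|S| <= #|neighbours B S|.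

Definition matching A B (f : X -> Y) : Prop :=
  {in A &, injective f} /\ forall x, x \in A -> f x \in B /\ R x (f x).

Lemma matchingS A B B' f : B \subset B' -> matching A B f -> matching A B' f.
Proof. by move=> sBB' [injf Af]; split=> // x /Af[/(subsetP sBB')]. Qed.

Definition piecewise A1 (f1 f2 : X -> Y) x := if x \in A1 then f1 x else f2 x.

Lemma matchingU A1 A2 B1 B2 f1 f2 :
  [disjoint B1 & B2] -> matching A1 B1 f1 -> matching A2 B2 f2 ->
  matching (A1 :|: A2) (B1 :|: B2) (piecewise A1 f1 f2).
Proof.
move=> dB [inj1 hf1] [inj2 hf2].
have hf x : x \in A1 :|: A2 ->
    [/\ (piecewise A1 f1 f2 x \in B1) = (x \in A1), piecewise A1 f1 f2 x \in B1 :|: B2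
      & R x (piecewise A1 f1 f2 x)].
  rewrite /piecewise inE; case: ifP => [xA1 _ | xA1 /= xA2].
    by have [fB ->] := hf1 x xA1; rewrite inE fB.
  have [fB ->] := hf2 x xA2; rewrite inE fB orbT; split=> //.
  by apply/negbTE; move: dB; rewrite disjoint_sym => /disjointFr->.
split=> [x y xA yA hxy | x /hf[]] //.
have sameA1 : (x \in A1) = (y \in A1).
  by have [<- _ _] := hf x xA; have [<- _ _] := hf y yA; rewrite hxy.
move: hxy; rewrite /piecewise -sameA1; case: ifP => xA1.
  by apply: inj1; rewrite // -sameA1.
by apply: inj2; [move: xA | move: yA]; rewrite inE -?sameA1 xA1.
Qed.

Lemma neighbours_restrict B S T :
  T \subset S -> neighbours (neighbours B S) T = neighbours B T.
Proof.
move=> sTS; apply/setP=> y; rewrite !inE -andbA; case: (boolP [exists x in T, R x y]).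
  move=> /existsP[x /andP[xT Rxy]]; rewrite !andbT; apply/andb_idr => _.
  by apply/existsP; exists x; rewrite (subsetP sTS).
by rewrite !andbF.
Qed.

Lemma neighboursD B B' T : neighbours B T \subset neighbours (B :\: B') T :|: B'.
Proof. by apply/subsetP=> y; rewrite !inE => /andP[-> ->]; rewrite !andbT orNb. Qed.

Lemma neighboursUD B S T :
  neighbours B (T :|: S) \subset neighbours (B :\: neighbours B S) T :|: neighbours B S.
Proof.
apply/subsetP=> y; rewrite [y \in neighbours _ _]inE => /andP[yB /existsP[x]].
rewrite in_setU => /andP[/orP[xT|xS] Rxy]; rewrite !inE yB /=; last first.
  by apply/orP; right; apply/existsP; exists x; rewrite xS.
case: [exists x0 in S, R x0 y]; rewrite ?orbT //=.
by rewrite orbF; apply/existsP; exists x; rewrite xT.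
Qed.

(* Halmos-Vaughan induction: either some nonempty proper S has exactly |S| neighbours, and S
   and its complement are matched separately, or every such S has a spare neighbour, and any
   edge at a fixed vertex can be used first. *)
Section HallStep.
Variable A : {set X}.
Hypothesis IH : forall (A' : {set X}) (B' : {set Y}),
  #|A'| < #|A| -> hall_condition A' B' -> exists f, matching A' B' f.

Lemma hall_critical B S : hall_condition A B -> S \proper A -> S != set0 ->
  #|neighbours B S| <= #|S| -> exists f, matching A B f.
Proof.
move=> hallAB pSA nS0 critS; have sSA := proper_sub pSA.
have eqS : #|neighbours B S| = #|S| by apply/eqP; rewrite eqn_leq critS hallAB.
have [f1 match1] : exists f, matching S (neighbours B S) f.
  apply: IH (proper_card pSA) _ => T sTS; rewrite neighbours_restrict //.
  exact/hallAB/(subset_trans sTS).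
have [f2 match2] : exists f, matching (A :\: S) (B :\: neighbours B S) f.
  apply: IH _ _.
    by rewrite cardsDS // ltn_subrL card_gt0 nS0 (leq_ltn_trans _ (proper_card pSA)).
  move=> T sTAS; have dTS : [disjoint T & S].
    by apply: disjointWl sTAS _; rewrite disjoints_subset subsetDr.
  have sTSA : T :|: S \subset A by rewrite subUset sSA andbT (subset_trans sTAS) ?subsetDl.
  have := leq_trans (hallAB _ sTSA) (subset_leq_card (neighboursUD B S T)).
  by rewrite !cardsU (disjoint_setI0 dTS) cards0 eqS; lia.
exists (piecewise S f1 f2); rewrite -(setID A S) (setIidPr sSA).
apply: matchingS (matchingU _ match1 match2).
  by rewrite subUset subsetDl andbT; apply/subsetP=> y; rewrite inE => /andP[].
by rewrite disjoint_sym disjoints_subset subsetDr.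
Qed.

Lemma hall_surplus B x0 : hall_condition A B -> x0 \in A ->
  (forall S, S \proper A -> S != set0 -> #|S| < #|neighbours B S|) ->
  exists f, matching A B f.
Proof.
move=> hallAB x0A surplus.
have [y1 Ny1] : exists y1, y1 \in neighbours B [set x0].
  by apply/set0Pn; rewrite -card_gt0 (leq_trans _ (hallAB _ _)) ?cards1 ?sub1set.
have [y1B Rx0y1] : y1 \in B /\ R x0 y1.
  by move: Ny1; rewrite inE => /andP[-> /existsP[x /andP[]]]; rewrite inE => /eqP->.
have [f match_f] : exists f, matching (A :\ x0) (B :\ y1) f.
  apply: IH _ _ => [|T sTA]; first by rewrite (cardsD1 x0 A) x0A.
  have [->|nT0] := eqVneq T set0; first by rewrite cards0.
  have pTA : T \proper A.
    rewrite properE (subset_trans sTA) ?subsetDl //=; apply/subsetP => /(_ x0 x0A) x0T.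
    by have := subsetP sTA x0 x0T; rewrite !inE eqxx.
  have := leq_trans (surplus T pTA nT0) (subset_leq_card (neighboursD B [set y1] T)).
  by rewrite cardsU cards1; lia.
have match_x0 : matching [set x0] [set y1] (fun=> y1).
  by split=> [x y|x]; rewrite ?inE => /eqP->; rewrite ?eqxx // => /eqP->.
exists (piecewise [set x0] (fun=> y1) f); rewrite -(setD1K x0A).
apply: matchingS (matchingU _ match_x0 match_f).
  by rewrite subUset sub1set y1B subsetDl.
by rewrite disjoints1 !inE eqxx.
Qed.
End HallStep.

Theorem hall_marriage (y0 : Y) A B : hall_condition A B -> exists f, matching A B f.
Proof.
have [n] := ubnP #|A|; elim: n A B => // n IHn A B ltAn hallAB.
have IH A' B' : #|A'| < #|A| -> hall_condition A' B' -> exists f, matching A' B' f.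
  by move=> ltA'; apply: IHn; apply: leq_trans ltA' ltAn.
have [-> | /set0Pn[x0 x0A]] := eqVneq A set0.
  by exists (fun=> y0); split=> [x|x]; rewrite inE.
have [/existsP[S /and3P[pSA nS0 critS]] | noCrit] :=
  boolP [exists S : {set X}, [&& S \proper A, S != set0 & #|neighbours B S| <= #|S|]].
  exact: (hall_critical IH hallAB pSA nS0 critS).
apply: (hall_surplus IH hallAB x0A) => S pSA nS0; rewrite ltnNge.
by apply: contra noCrit => critS; apply/existsP; exists S; rewrite pSA nS0.
Qed.
End HallMarriage.

Section RegularDecomposition.
Variables (X Y : finType) (y0 : Y).
Implicit Types (d : nat) (A : X -> Y -> nat).

Lemma regular_hall d A :
  (forall x, \sum_y A x y = d.+1) -> (forall y, \sum_x A x y = d.+1) ->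
  hall_condition (fun x y => 0 < A x y) setT setT.
Proof.
move=> rowA colA S _; rewrite -(leq_pmul2r (ltn0Sn d)) -!sum_nat_const.
set N := neighbours _ _ _.
have -> : \sum_(x in S) d.+1 = \sum_(x in S) \sum_(y in N) A x y.
  apply: eq_bigr => x xS; rewrite -(rowA x) [RHS]big_mkcond /=; apply: eq_bigr => y _.
  case: ifP => // yN; case: (posnP (A x y)) => // Axy.
  by move: yN; rewrite !inE /=; case/existsP; exists x; rewrite xS.
rewrite exchange_big /=; apply: leq_sum => y _; rewrite -(colA y).
by rewrite [leqRHS](bigID (mem S)) /= leq_addr.
Qed.

Lemma regular_card d A :
  (forall x, \sum_y A x y = d.+1) -> (forall y, \sum_x A x y = d.+1) -> #|X| = #|Y|.
Proof.
move=> rowA colA; apply/eqP; rewrite -(eqn_pmul2r (ltn0Sn d)) -!sum_nat_const.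
rewrite (eq_bigr _ (fun x _ => esym (rowA x))) (eq_bigr _ (fun y _ => esym (colA y))).
by rewrite exchange_big.
Qed.

Lemma sum_inj_eq1 (f : X -> Y) y : injective f -> #|X| = #|Y| -> \sum_x (f x == y) = 1.
Proof.
move=> injf cardXY; have /codomP[x1 ->] := inj_card_onto injf (eq_leq (esym cardXY)) y.
by under eq_bigr do rewrite (inj_eq injf); exact: (sum_pred_eq xpredT).
Qed.

Theorem regular_decomposition d A :
  (forall x, \sum_y A x y = d) -> (forall y, \sum_x A x y = d) ->
  exists g : 'I_d -> X -> Y,
    (forall i, injective (g i)) /\ forall x y, \sum_i (g i x == y) = A x y.
Proof.
elim: d A => [|d IH] A rowA colA.
  exists (fun _ _ => y0); split=> [[]//|x y]; rewrite big_ord0.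
  by have /eqP := rowA x; rewrite sum_nat_eq0 => /forallP/(_ y)/eqP.
have [f [injf matchf]] := hall_marriage y0 (regular_hall rowA colA).
have {}injf : injective f by move=> x1 x2; apply: injf; rewrite inE.
have Af_gt0 x : 0 < A x (f x) by have [] := matchf x (in_setT x).
have colf y : \sum_x (f x == y) = 1 by apply: sum_inj_eq1 (regular_card rowA colA).
have rowf x : \sum_y (f x == y) = 1.
  by under eq_bigr do rewrite eq_sym; exact: (sum_pred_eq xpredT).
pose A' x y := A x y - (f x == y).
have AE x y : A x y = A' x y + (f x == y).
  by rewrite /A'; case: eqP => [<-|_]; [have := Af_gt0 x; lia | rewrite subn0 addn0].
have [g' [injg' sumg']] : exists g' : 'I_d -> X -> Y,
    (forall i, injective (g' i)) /\ forall x y, \sum_i (g' i x == y) = A' x y.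
  apply: IH => [x|y].
    by have := rowA x; rewrite (eq_bigr _ (fun y _ => AE x y)) big_split /= rowf addn1 => -[].
  by have := colA y; rewrite (eq_bigr _ (fun x _ => AE x y)) big_split /= colf addn1 => -[].
exists (fun i => if unlift ord0 i is Some i' then g' i' else f); split.
  by move=> i; case: unlift.
move=> x y; rewrite big_ord_recl unlift_none /=.
by under eq_bigr do rewrite liftK; rewrite sumg' AE addnC.
Qed.
End RegularDecomposition.

(* [N] is [x / q] rounded down or up. *)
Definition rounds (q x N : nat) : Prop := N * q < x + q /\ x < N * q + q.

Lemma rounds_divn q x N : 0 < q -> x %/ q <= N <= (x + q.-1) %/ q -> rounds q x N.
Proof.
move=> q_gt0 /andP[lo hi]; split.
  apply: (@leq_ltn_trans ((x + q.-1) %/ q * q)); first by rewrite leq_mul2r hi orbT.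
  by apply: leq_ltn_trans (leq_divM _ _) _; lia.
by apply: (leq_trans (ltn_ceil x q_gt0)); rewrite -mulSnr leq_mul2r ltnS lo orbT.
Qed.

Lemma roundsD q a x N : rounds q x N -> rounds q (a * q + x) (a + N).
Proof. by case=> hi lo; rewrite /rounds mulnDl -!addnA !ltn_add2l. Qed.

Lemma rounds_exact q a N : rounds q (a * q) N -> N = a.
Proof.
case=> hi lo; have q_gt0 : 0 < q by case: q hi lo => //; rewrite !muln0.
have : N < a.+1 by rewrite -(ltn_pmul2r q_gt0) mulSnr.
have : a < N.+1 by rewrite -(ltn_pmul2r q_gt0) mulSnr.
lia.
Qed.

Section PeriodicRoster.
Variables (C : finType) (q : nat) (q_gt0 : 0 < q).

Definition prefix_count (r : 'I_q -> C) (j : C) (l : nat) : nat :=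
  \sum_(p < q | p < l) (r p == j).

(* Positions are numbered from 1, so position [k] reads the entry [(k - 1) mod q] of [r]. *)
Definition periodic_roster (r : 'I_q -> C) (k : nat) : C :=
  r (Ordinal (ltn_pmod k.-1 q_gt0)).

Lemma sum_periodic (F : nat -> nat) : (forall i, F (i + q) = F i) ->
  forall a b, \sum_(i < a * q + b) F i = a * \sum_(i < q) F i + \sum_(i < b) F i.
Proof.
move=> Fq; elim=> [|a IHa] b; first by rewrite mul0n add0n.
rewrite mulSn -addnA big_split_ord /= (eq_bigr (fun i : 'I_(a * q + b) => F i)).
  by rewrite IHa mulSn addnA.
by move=> i _; rewrite addnC Fq.
Qed.

Lemma count_upto_periodic (r : 'I_q -> C) j l :
  count_upto (periodic_roster r) j l = l %/ q * prefix_count r j q + prefix_count r j (l %% q).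
Proof.
pose F i := (r (Ordinal (ltn_pmod i q_gt0)) == j : nat).
have Fq i : F (i + q) = F i.
  by rewrite /F; congr (r _ == j : nat); apply: val_inj; rewrite /= modnDr.
have ordE (p : 'I_q) : Ordinal (ltn_pmod p q_gt0) = p by apply: val_inj; rewrite /= modn_small.
rewrite /count_upto big_add1 /= big_mkord.
have := sum_periodic Fq (l %/ q) (l %% q); rewrite -divn_eq => ->.
congr (_ * _ + _); rewrite /prefix_count.
  by apply: eq_big => [p|p _]; rewrite ?ltn_ord // /F ordE.
rewrite (big_ord_widen q F (ltnW (ltn_pmod l q_gt0))).
by apply: eq_bigr => p _; rewrite /F ordE.
Qed.
End PeriodicRoster.

Section Windows.
Variables (C : finType) (m : C -> nat).
Local Notation q := (\sum_j m j).
Hypothesis q_gt0 : 0 < q.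

Definition token := {j : C & 'I_(m j)}.

(* The number of u < m_j q with u / q = k and u / m_j = p, i.e. q m_j times the length of the
   intersection of the windows [k/m_j, (k+1)/m_j) of the token t = (j, k) and [p/q, (p+1)/q)
   of the position p. *)
Definition overlap (t : token) (p : nat) : nat :=
  \sum_(u < m (tag t) * q) ((u %/ q == tagged t) && (u %/ m (tag t) == p)).

Lemma card_token : #|{: token}| = q.
Proof.
rewrite card_tagged sumnE big_map big_enum /=.
by apply: eq_bigr => j _; rewrite card_ord.
Qed.

Lemma sum_tag (F : token -> nat) j :
  \sum_(t | tag t == j) F t = \sum_(k < m j) F (Tagged (fun i => 'I_(m i)) k).
Proof.
rewrite -(big_pred1_eq addn j (fun i => \sum_(k < m i) F (Tagged (fun i => 'I_(m i)) k))).
rewrite (sig_big_dep (fun i => i == j) (fun _ _ => true)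
  (fun i (k : 'I_(m i)) => F (Tagged (fun i => 'I_(m i)) k))).
by apply: eq_big => [[i k]|[i k] _] //=; rewrite andbT.
Qed.

Lemma overlap_row t : \sum_(p < q) overlap t p = q.
Proof.
rewrite /overlap exchange_big /= -[RHS](sum_divn_eq q (ltn_ord (tagged t))).
apply: eq_bigr => u _; under eq_bigr do rewrite -mulnb.
rewrite -big_distrr /= sum_ord_eq ltn_divLR; last exact: leq_ltn_trans (ltn_ord (tagged t)).
by rewrite [q * _]mulnC ltn_ord muln1.
Qed.

Lemma overlap_col_tag j p : p < q -> \sum_(t | tag t == j) overlap t p = m j.
Proof.
move=> pq; rewrite sum_tag /overlap /= -[RHS](sum_divn_eq (m j) pq) [q * m j]mulnC.
rewrite exchange_big /=; apply: eq_bigr => u _.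
under eq_bigr do rewrite andbC -mulnb.
by rewrite -big_distrr /= sum_ord_eq ltn_divLR // ltn_ord muln1.
Qed.

Lemma overlap_col p : p < q -> \sum_t overlap t p = q.
Proof.
move=> pq; rewrite (partition_big (fun t : token => tag t) predT) //=.
by apply: eq_bigr => j _; apply: overlap_col_tag.
Qed.

Lemma overlap_window t p : 0 < overlap t p ->
  tagged t * q < p.+1 * m (tag t) /\ p * m (tag t) < (tagged t).+1 * q.
Proof.
have m_gt0 : 0 < m (tag t) by apply: leq_ltn_trans (ltn_ord (tagged t)).
case: (boolP [exists u : 'I_(m (tag t) * q), (u %/ q == tagged t) && (u %/ m (tag t) == p)]).
  case/existsP=> u /andP[/eqP uk /eqP up] _.
  have k_lo : tagged t * q <= u by rewrite -uk leq_divM.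
  have k_hi : u < (tagged t).+1 * q by rewrite -uk ltn_ceil.
  have p_lo : p * m (tag t) <= u by rewrite -up leq_divM.
  have p_hi : u < p.+1 * m (tag t) by rewrite -up ltn_ceil.
  by split; [apply: leq_ltn_trans k_lo p_hi | apply: leq_ltn_trans p_lo k_hi].
by move/existsPn=> none; rewrite /overlap big1 // => u _; rewrite (negbTE (none u)).
Qed.

Section Assignment.
Variable g : 'I_q -> token.
Hypotheses (g_inj : injective g) (g_supp : forall p, 0 < overlap (g p) p).

Lemma prefix_count_assignment j l :
  prefix_count (tag \o g) j l = \sum_(t | tag t == j) \sum_(p < q | p < l) (g p == t).
Proof.
rewrite /prefix_count exchange_big /=; apply: eq_bigr => p _.
rewrite (eq_bigr (fun t => (t == g p) : nat)) => [|t _]; last by rewrite eq_sym.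
by rewrite (sum_pred_eq (fun t : token => tag t == j)).
Qed.

Lemma placed_before_gt0 (t : token) l :
  (tagged t).+1 * q <= l * m (tag t) -> 0 < \sum_(p < q | p < l) (g p == t).
Proof.
have /codomP[p ->] := inj_card_onto g_inj (eq_leq (etrans card_token (esym (card_ord q)))) t.
move=> le_kl.
have [_ /leq_trans/(_ le_kl)] := overlap_window (g_supp p).
by rewrite ltn_mul2r => /andP[_ pl]; rewrite (bigD1 p) //= eqxx.
Qed.

Lemma placed_before_le (t : token) l :
  \sum_(p < q | p < l) (g p == t) <= (tagged t * q < l * m (tag t)).
Proof.
case: ltnP => [_ | le_lk].
  apply: (@leq_trans (\sum_p (g p == t))).
    by rewrite [leqRHS](bigID (fun p : 'I_q => p < l)) leq_addr.
  by rewrite sum_inj_eq1 // card_ord card_token.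
rewrite leqn0 sum_nat_eq0; apply/forallP => p; apply/implyP => pl.
rewrite eqb0; apply/eqP => gpt.
have [+ _] := overlap_window (g_supp p); rewrite {}gpt ltnNge => /negP; apply.
by apply: leq_trans le_lk; rewrite leq_mul2r pl orbT.
Qed.

Lemma assignment_rounds j l : l <= q -> rounds q (l * m j) (prefix_count (tag \o g) j l).
Proof.
move=> lq; have x_le : l * m j %/ q <= m j.
  apply: (@leq_trans (q * m j %/ q)); last by rewrite mulKn.
  by apply: leq_div2r; rewrite leq_mul2r lq orbT.
have ceil k : k * q < l * m j -> k < (l * m j + q.-1) %/ q.
  by move=> lt_kx; rewrite leq_divRL // mulSnr; lia.
apply: rounds_divn => //; rewrite prefix_count_assignment; apply/andP; split.
  rewrite -[leqLHS](minn_idPl x_le) -sum_ltn_ord.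
  rewrite -(sum_tag (fun t => tagged t < l * m j %/ q)); apply: leq_sum => t /eqP tj.
  by case: ltnP => //= lt_kx; apply: placed_before_gt0; move: lt_kx; rewrite -tj leq_divRL.
apply: (@leq_trans (\sum_(k < m j) (k < (l * m j + q.-1) %/ q))); last first.
  by rewrite sum_ltn_ord geq_minl.
rewrite -(sum_tag (fun t => tagged t < (l * m j + q.-1) %/ q)); apply: leq_sum => t /eqP tj.
apply: leq_trans (placed_before_le t l) _; rewrite -tj in ceil *.
by case: (boolP (tagged t * q < l * m (tag t))) => //= /ceil ->.
Qed.
End Assignment.

Lemma assignments_mean (g : 'I_q -> 'I_q -> token) :
  (forall p t, \sum_i (g i p == t) = overlap t p) ->
  forall j l, l <= q -> \sum_i prefix_count (tag \o g i) j l = l * m j.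
Proof.
move=> g_sum j l lq; rewrite /prefix_count exchange_big /=.
rewrite (eq_bigr (fun _ => m j)) => [|p _]; last first.
  rewrite -(overlap_col_tag j (ltn_ord p)); under [RHS]eq_bigr do rewrite -g_sum.
  rewrite exchange_big /=; apply: eq_bigr => i _; symmetry.
  rewrite (eq_bigr (fun t => (t == g i p) : nat)) => [|t _]; last by rewrite eq_sym.
  exact: (sum_pred_eq (fun t : token => tag t == j)).
rewrite big_mkcond /= (eq_bigr (fun p : 'I_q => (p < l) * m j)) => [|p _].
  by rewrite -big_distrl /= sum_ltn_ord (minn_idPl lq).
by case: ifP; rewrite ?mul1n.
Qed.

Theorem within_quota_rosters : exists rs : 'I_q -> nat -> C,
  (forall i j l, rounds q (l * m j) (count_upto (rs i) j l)) /\
  (forall j l, \sum_i count_upto (rs i) j l = l * m j).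
Proof.
have [j0 mj0_gt0] : exists j, 0 < m j.
  apply/existsP; apply: contraLR q_gt0 => /existsPn m0.
  by rewrite -leqNgt leqn0 sum_nat_eq0; apply/forallP => j; rewrite -leqn0 leqNgt m0.
have [g [g_inj g_sum]] :=
  @regular_decomposition _ _ (Tagged (fun i => 'I_(m i)) (Ordinal mj0_gt0))
    q (fun (p : 'I_q) t => overlap t p) (fun p => overlap_col (ltn_ord p)) overlap_row.
have g_supp i p : 0 < overlap (g i p) p by rewrite -g_sum (bigD1 i) //= eqxx.
have period i j : prefix_count (tag \o g i) j q = m j.
  by apply: rounds_exact; rewrite mulnC; apply: assignment_rounds.
have countE i j l : count_upto (periodic_roster q_gt0 (tag \o g i)) j l =
    l %/ q * m j + prefix_count (tag \o g i) j (l %% q).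
  by rewrite count_upto_periodic period.
exists (fun i => periodic_roster q_gt0 (tag \o g i)); split=> [i j l | j l].
  rewrite countE {1}(divn_eq l q) mulnDl mulnAC.
  exact/roundsD/assignment_rounds/ltnW/ltn_pmod.
rewrite (eq_bigr _ (fun i _ => countE i j l)) big_split /=.
rewrite (assignments_mean g_sum); last exact/ltnW/ltn_pmod.
by rewrite sum_nat_const card_ord mulnA [q * _]mulnC -mulnDl -divn_eq.
Qed.
End Windows.

Import Order.TTheory GRing.Theory Num.Theory.
Local Open Scope ring_scope.

Lemma common_denominator (C : finType) (alpha : C -> rat) :
  (forall j, 0 <= alpha j) -> \sum_j alpha j = 1 ->
  exists m : C -> nat, (0 < \sum_j m j)%N /\ forall j, alpha j = (m j)%:R / (\sum_i m i)%:R.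
Proof.
move=> alpha_ge0 alpha_sum.
have [q [m [q_gt0 alphaE]]] : exists (q : nat) (m : C -> nat),
    (0 < q)%N /\ forall j, alpha j = (m j)%:R / q%:R.
  pose d j := `|denq (alpha j)|%N; pose q := (\prod_j d j)%N.
  have d_gt0 j : (0 < d j)%N by rewrite absz_gt0 denq_neq0.
  have dvd_dq j : (d j %| q)%N by rewrite /q (bigD1 j) //= dvdn_mulr.
  exists q, (fun j => `|numq (alpha j)| * (q %/ d j))%N; split; first by rewrite prodn_gt0.
  move=> j; have qE : q = (q %/ d j * d j)%N by rewrite divnK.
  rewrite [in X in _ / X]qE !natrM [X in _ / X]mulrC -mulf_div divff ?mulr1; last first.
    by rewrite pnatr_eq0 -lt0n divn_gt0 // dvdn_leq // prodn_gt0.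
  by rewrite -[LHS]divq_num_den /d !natr_absz !ger0_norm ?denq_ge0 ?numq_ge0.
suff qE : \sum_j m j = q by exists m; rewrite qE.
have sum_q : \sum_j alpha j * q%:R = q%:R by rewrite -mulr_suml alpha_sum mul1r.
apply/eqP; rewrite -(eqr_nat rat) natr_sum -sum_q.
by apply/eqP/eq_bigr => j _; rewrite alphaE divfK // pnatr_eq0 -lt0n.
Qed.

Lemma rounds_floor_ceil (R : archiRealFieldType) (q x N : nat) : rounds q x N ->
  Num.floor (x%:R / q%:R : R) <= N%:Z /\ N%:Z <= Num.ceil (x%:R / q%:R : R).
Proof.
case=> hi lo; have q_gt0 : (0 < q)%N by case: q hi lo => //; rewrite !muln0.
have q_pos : (0 : R) < q%:R by rewrite ltr0n.
have floor_lt : Num.floor (x%:R / q%:R : R) < N%:Z + 1.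
  have -> : N%:Z + 1 = N.+1%:Z by rewrite -addn1.
  by rewrite floor_lt_int ltr_pdivrMr // -natrM ltr_nat mulSnr.
have ceil_gt : N%:Z - 1 < Num.ceil (x%:R / q%:R : R).
  rewrite ceil_gt_int intrB ltr_pdivlMr // mulrBl mul1r ltrBlDr.
  by rewrite -natrM -natrD ltr_nat.
by split; lia.
Qed.

From mathcomp Require Import all_classical all_reals all_analysis.

Definition uniform_nat (R : realType) (n : nat) : set nat -> \bar R :=
  msum (fun k => mscale ((n.+1%:R : R)^-1)%:nng (@dirac _ nat k R)) n.+1.

HB.instance Definition _ (R : realType) (n : nat) := Measure.on (uniform_nat R n).

Lemma uniform_nat_setT (R : realType) (n : nat) : uniform_nat R n setT = 1%E.
Proof.
rewrite /uniform_nat /msum /mscale /=.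
under eq_bigr => i _ do rewrite /mscale /= /dirac indicE in_setT mule1.
by rewrite sumEFin big_const_ord iter_addr addr0 -mulr_natr mulVf // pnatr_eq0.
Qed.

HB.instance Definition _ (R : realType) (n : nat) :=
  @Measure_isProbability.Build _ _ R (uniform_nat R n) (uniform_nat_setT R n).

Lemma integral_uniform_nat (R : realType) (n : nat) (f : nat -> nat) :
  (\int[uniform_nat R n]_w ((f w)%:R : R)%:E =
   ((\sum_(k < n.+1) f k)%N%:R / n.+1%:R : R)%:E)%E.
Proof.
rewrite /uniform_nat ge0_integral_measure_sum //=.
under eq_bigr => i _ do rewrite ge0_integral_mscale //= integral_dirac //= diracT mul1e.
by rewrite -ge0_sume_distrr //= sumEFin natr_sum -EFinM mulrC.
Qed.

Theorem mainTheorem6 (R : realType) (C : finType) (alpha : C -> rat) :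
  (1 < #|C|)%N ->
  (forall j, 0 < alpha j < 1) ->
  \sum_(j : C) alpha j = 1 ->
  exists (d : measure_display) (T : measurableType d) (P : probability T R)
         (sigma : T -> nat -> C),
    unbiased_within_quota_random_roster P alpha sigma.
Proof.
move=> _ alpha_bounds alpha_sum.
have [m [q_gt0 alphaE]] := common_denominator (fun j => ltW (andP (alpha_bounds j)).1) alpha_sum.
have [rs [rs_rounds rs_mean]] := within_quota_rosters q_gt0.
have lalphaE j l : l%:R * alpha j = (l * m j)%:R / (\sum_i m i)%:R.
  by rewrite alphaE natrM mulrA.
exists _, nat, (uniform_nat R (\sum_j m j).-1), (fun w => rs (Ordinal (ltn_pmod w q_gt0))).
split=> // [|l j _].
  by apply: aeW => w l j _; rewrite lalphaE; apply/rounds_floor_ceil/rs_rounds.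
rewrite integral_uniform_nat prednK //; congr EFin.
rewrite (eq_bigr (fun i => count_upto (rs i) j l)) => [|i _]; last first.
  by congr count_upto; congr rs; apply: val_inj; rewrite /= modn_small.
by rewrite rs_mean alphaE fmorph_div /= !ratr_nat natrM mulrA.
Qed.
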